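(* Let $G$ be a locally finite graph with graph metric $d$, $h$ an even positive integer and $R$ a positive integer. Let $S_1\subseteq V(G)$ be such that distinct elements of $S_1$ are at $d$-distance greater than $h$ and every vertex is at $d$-distance at most $h$ from $S_1$; let $\ell_1:S_1\to[0,1/2]$ be injective, let $\mathcal V_1(v)$ be the unique $s\in S_1$ minimizing $d(v,s)+\ell_1(s)$, and $V_{1,s}=\{v:\mathcal V_1(v)=s\}$. Let $\Gamma$ be the graph on vertex set $S_1$ in which distinct $s,s'$ are adjacent iff some edge of $G$ joins $V_{1,s}$ and $V_{1,s'}$, with graph metric $d_\Gamma$. Let $S_2\subseteq S_1$ be such that distinct elements of $S_2$ are at $d_\Gamma$-distance greater than $R$ and every element of $S_1$ is at $d_\Gamma$-distance at most $R$ from $S_2$; let $\ell_2:S_2\to[0,1/2]$ be injective, and for $s'\in S_1$ let $\mathcal V_2(s')$ be the unique $s\in S_2$ minimizing $d_\Gamma(s',s)+\ell_2(s)$. For $s\in S_2$ set $V_{2,s}=\{v\in V(G):\mathcal V_2(\mathcal V_1(v))=s\}$. Then for every $s\in S_2$, the induced subgraph $G[V_{2,s}]$ is connected and contains every vertex at $d$-distance at most $\lfloor R/2\rfloor-h$ from $s$. *)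

From Stdlib Require Import Reals ZArith Arith List Lia Lra.
Open Scope R_scope.

Section Graphs.
Variable V : Type.

Definition simple_graph (adj : V -> V -> Prop) : Prop :=
  (forall u v, adj u v -> adj v u) /\ (forall v, ~ adj v v).

Definition locally_finite (adj : V -> V -> Prop) : Prop :=
  forall v, exists l : list V, forall u, adj v u -> In u l.

Inductive walk (adj : V -> V -> Prop) : V -> V -> nat -> Prop :=
| walk_nil : forall v, walk adj v v 0
| walk_cons : forall u w v n, adj u w -> walk adj w v n -> walk adj u v (S n).

Definition dist_le (adj : V -> V -> Prop) (u v : V) (n : nat) : Prop :=
  exists m, (m <= n)%nat /\ walk adj u v m.

(* d(u,v) = n (graph metric; no such n when u,v are in different components) *)
Definition is_dist (adj : V -> V -> Prop) (u v : V) (n : nat) : Prop :=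
  dist_le adj u v n /\ forall m, dist_le adj u v m -> (n <= m)%nat.

Definition vor_min (adj : V -> V -> Prop) (S : V -> Prop) (l : V -> R)
  (v s : V) : Prop :=
  S s /\ exists n, is_dist adj v s n /\
    forall s' n', S s' -> is_dist adj v s' n' -> INR n + l s <= INR n' + l s'.

Definition cell_graph (adj : V -> V -> Prop) (S1 : V -> Prop) (l1 : V -> R)
  (s s' : V) : Prop :=
  S1 s /\ S1 s' /\ s <> s' /\
  exists u w, vor_min adj S1 l1 u s /\ vor_min adj S1 l1 w s' /\ adj u w.

Definition cell2 (adj : V -> V -> Prop) (S1 : V -> Prop) (l1 : V -> R)
  (S2 : V -> Prop) (l2 : V -> R) (s v : V) : Prop :=
  exists s1, vor_min adj S1 l1 v s1 /\ vor_min (cell_graph adj S1 l1) S2 l2 s1 s.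

Definition induced (adj : V -> V -> Prop) (P : V -> Prop) (u w : V) : Prop :=
  adj u w /\ P u /\ P w.

Definition connected_in (adj : V -> V -> Prop) (P : V -> Prop) : Prop :=
  forall u w, P u -> P w -> exists n, walk (induced adj P) u w n.

Definition separated (adj : V -> V -> Prop) (S : V -> Prop) (h : nat) : Prop :=
  forall s s', S s -> S s' -> s <> s' -> ~ dist_le adj s s' h.
Definition net_covering (adj : V -> V -> Prop) (D S : V -> Prop) (h : nat) : Prop :=
  forall v, D v -> exists s, S s /\ dist_le adj v s h.

Definition good_label (S : V -> Prop) (l : V -> R) : Prop :=
  (forall s, S s -> 0 <= l s <= 1/2) /\
  (forall s s', S s -> S s' -> l s = l s' -> s = s').

End Graphs.
Arguments walk {V}.
Arguments dist_le {V}.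
Arguments is_dist {V}.
Arguments vor_min {V}.
Arguments cell_graph {V}.
Arguments cell2 {V}.
Arguments induced {V}.
Arguments connected_in {V}.
Arguments separated {V}.
Arguments net_covering {V}.
Arguments good_label {V}.
Arguments simple_graph {V}.
Arguments locally_finite {V}.

From Stdlib Require Import Reals ZArith Arith List.
From Stdlib Require Import Lia Lra Classical.
Open Scope R_scope.

(* A Voronoi cell is star-shaped around its site: along a geodesic from a vertex
   of the cell to the site, d(., s) drops by one per step while the distance to
   any competing site drops by at most one, so the whole geodesic stays in the
   cell.  Hence every first-level cell is connected to its site inside the cell,
   and every second-level cell V_{2,s} is the union of the first-level cells of
   a Gamma-connected set of sites containing s, which makes G[V_{2,s}] connected.
   For the ball: a walk of length n in G from v to s crosses at most n cell
   boundaries, so the site of v is at Gamma-distance d <= n <= R/2 from s, while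
   every other element of S2 is at Gamma-distance > R - d >= d from it; since
   labels lie in [0,1/2] they only break ties, and the site of v is assigned s. *)

Set Implicit Arguments.

Section Walks.
Variables (V : Type) (a : V -> V -> Prop).

Lemma walk_app u v w m k : walk a u v m -> walk a v w k -> walk a u w (m + k).
Proof. induction 1; simpl; intros; auto. econstructor; eauto. Qed.

Lemma walk_0_inv u v : walk a u v 0 -> u = v.
Proof. intros W; inversion W; auto. Qed.

Lemma walk_S_inv u v n : walk a u v (S n) -> exists w, a u w /\ walk a w v n.
Proof. intros W; inversion W; subst; eauto. Qed.

Lemma walk_rev (sym : forall x y, a x y -> a y x) u v m :
  walk a u v m -> walk a v u m.
Proof.
  induction 1 as [|u w v n Huw _ IH]; [constructor|].
  replace (S n) with (n + 1)%nat by lia.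
  apply walk_app with w; auto. econstructor; [apply sym; eauto | constructor].
Qed.

Lemma induced_sym (sym : forall x y, a x y -> a y x) (P : V -> Prop) x y :
  induced a P x y -> induced a P y x.
Proof. intros [Hxy [Px Py]]; split; auto. Qed.

Lemma walk_mono (b : V -> V -> Prop) (ab : forall x y, a x y -> b x y) u v m :
  walk a u v m -> walk b u v m.
Proof. induction 1; econstructor; eauto. Qed.

Lemma dist_le_mono u v m k : dist_le a u v m -> (m <= k)%nat -> dist_le a u v k.
Proof. intros [j [Hj W]] H; exists j; split; auto; lia. Qed.

Lemma is_dist_of_dist_le u v k : dist_le a u v k -> exists n, is_dist a u v n.
Proof.
  revert u v; induction k as [|k IH]; intros u v D.
  - exists 0%nat; split; auto; intros; lia.
  - destruct (classic (dist_le a u v k)) as [Dk|Dk]; auto.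
    exists (S k); split; auto. intros m Dm.
    destruct (le_lt_dec m k); [|lia].
    exfalso; apply Dk; eapply dist_le_mono; eauto.
Qed.

Lemma is_dist_walk u v n : is_dist a u v n -> walk a u v n.
Proof.
  intros [[m [Hm W]] Hmin].
  assert (n <= m)%nat by (apply Hmin; exists m; split; auto).
  replace n with m by lia; auto.
Qed.

Lemma is_dist_le u v n m : is_dist a u v n -> dist_le a u v m -> (n <= m)%nat.
Proof. intros [_ Hmin]; apply Hmin. Qed.

Lemma is_dist_unique u v n n' : is_dist a u v n -> is_dist a u v n' -> n = n'.
Proof. intros [D H] [D' H']. specialize (H _ D'); specialize (H' _ D); lia. Qed.

Lemma is_dist_S_inv u v n :
  is_dist a u v (S n) -> exists w, a u w /\ is_dist a w v n.
Proof.
  intros D. destruct (walk_S_inv (is_dist_walk D)) as [w [Huw Wwv]].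
  exists w; split; auto. split; [exists n; auto|].
  intros m [k [Hk Wk]].
  enough (S n <= S k)%nat by lia.
  apply (is_dist_le D). exists (S k); split; auto. econstructor; eauto.
Qed.

Lemma ball_finite : locally_finite a ->
  forall k v, exists L, forall u, dist_le a v u k -> In u L.
Proof.
  intros LF; induction k as [|k IH]; intros v.
  - exists (v :: nil). intros u [m [Hm W]].
    replace m with 0%nat in W by lia. apply walk_0_inv in W; subst; left; auto.
  - destruct (LF v) as [Lv HLv].
    assert (Hballs : exists L', forall w, In w Lv ->
              forall u, dist_le a w u k -> In u L') by
      (clear HLv; induction Lv as [|x Lv [L1 H1]];
       [exists nil; intros w []
       |destruct (IH x) as [L2 H2]; exists (L2 ++ L1);
        intros w [<-|Hw] u Hu; apply in_or_app; eauto]).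
    destruct Hballs as [L' HL'].
    exists (v :: L'). intros u [[|m] [Hm W]].
    + apply walk_0_inv in W; subst; left; auto.
    + destruct (walk_S_inv W) as [w [Hvw Ww]]. right.
      apply HL' with w; [apply HLv; auto | exists m; split; [lia|auto]].
Qed.

End Walks.

Lemma list_min_exists {A : Type} (P : A -> Prop) (le : A -> A -> Prop)
  (tot : forall x y, P x -> P y -> le x y \/ le y x)
  (trans : forall x y z, P x -> P y -> P z -> le x y -> le y z -> le x z)
  (refl : forall x, le x x) (L : list A) :
  (exists x, In x L /\ P x) ->
  exists x, In x L /\ P x /\ forall y, In y L -> P y -> le x y.
Proof.
  induction L as [|z L IH]; intros [x [Hx Px]]; [destruct Hx|].
  destruct (classic (exists x, In x L /\ P x)) as [E|E].
  - destruct (IH E) as [m [Hm [Pm Hmin]]].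
    destruct (classic (P z)) as [Pz|Pz].
    + destruct (tot m z Pm Pz) as [Hmz|Hzm].
      * exists m; repeat split; [right; auto | auto |].
        intros y [<-|Hy] Py; auto.
      * exists z; repeat split; [left; auto | auto |].
        intros y [<-|Hy] Py; eauto.
    + exists m; repeat split; [right; auto | auto |].
      intros y [<-|Hy] Py; [contradiction | auto].
  - destruct Hx as [<-|Hx]; [|exfalso; eauto].
    exists z; repeat split; [left; auto | auto |].
    intros y [<-|Hy] Py; [auto | exfalso; eauto].
Qed.

Section Voronoi.
Variables (V : Type) (a : V -> V -> Prop) (sites : V -> Prop) (l : V -> R).
Hypothesis GL : good_label sites l.

Lemma vor_min_self s : sites s -> vor_min a sites l s s.
Proof.
  intros Ss. destruct GL as [Hb _]. split; auto. exists 0%nat. split.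
  - split; [exists 0%nat; split; auto; constructor | intros; lia].
  - intros t [|n'] St Dt.
    + apply is_dist_walk, walk_0_inv in Dt; subst; lra.
    + rewrite S_INR. pose proof (pos_INR n').
      destruct (Hb s Ss); destruct (Hb t St); simpl; lra.
Qed.

Lemma vor_min_unique u p q : vor_min a sites l u p -> vor_min a sites l u q -> p = q.
Proof.
  destruct GL as [Hb Hi].
  intros [Sp [np [Dp Hp]]] [Sq [nq [Dq Hq]]].
  specialize (Hp q nq Sq Dq). specialize (Hq p np Sp Dp).
  destruct (Hb p Sp); destruct (Hb q Sq).
  destruct (lt_eq_lt_dec np nq) as [[Hl|Hl]|Hl].
  - exfalso.
    assert (INR (S np) <= INR nq) by (apply le_INR; lia). rewrite S_INR in *; lra.
  - subst nq; apply Hi; auto; lra.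
  - exfalso.
    assert (INR (S nq) <= INR np) by (apply le_INR; lia). rewrite S_INR in *; lra.
Qed.

Lemma vor_min_exists h :
  locally_finite a -> net_covering a (fun _ => True) sites h ->
  forall v, exists s, vor_min a sites l v s.
Proof.
  intros LF Cov v. destruct GL as [Hb _].
  destruct (Cov v I) as [s0 [Ss0 D0]]. destruct (ball_finite LF h v) as [L HL].
  set (near := fun t => sites t /\ dist_le a v t h).
  set (better := fun t t' => forall n n', is_dist a v t n -> is_dist a v t' n' ->
                                 INR n + l t <= INR n' + l t').
  destruct (list_min_exists near better) with (L := L) as [t [_ [[St Dt] Hmin]]].
  - intros x y [_ Dx] [_ Dy].
    destruct (is_dist_of_dist_le Dx) as [nx Hx]; destruct (is_dist_of_dist_le Dy) as [ny Hy].
    destruct (Rle_dec (INR nx + l x) (INR ny + l y)) as [Hr|Hr]; [left|right]; intros n n' D D';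
      [rewrite (is_dist_unique D Hx), (is_dist_unique D' Hy)
      |rewrite (is_dist_unique D Hy), (is_dist_unique D' Hx)]; lra.
  - intros x y z _ [_ Dy] _ Hxy Hyz n n'' Dx Dz.
    destruct (is_dist_of_dist_le Dy) as [ny Hy].
    specialize (Hxy _ _ Dx Hy); specialize (Hyz _ _ Hy Dz); lra.
  - intros x n n' D D'. rewrite (is_dist_unique D D'); lra.
  - exists s0; repeat split; auto.
  - exists t. split; auto.
    destruct (is_dist_of_dist_le Dt) as [nt Hnt]. exists nt; split; auto.
    intros s' n' Ss' Ds'.
    destruct (le_lt_dec n' h) as [Hn'|Hn'].
    + assert (dist_le a v s' h) by (eapply dist_le_mono; [apply Ds' | auto]).
      apply Hmin; auto; split; auto.
    (* a site farther than h loses even against s0, which is within h *)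
    + destruct (is_dist_of_dist_le D0) as [n0 Hn0].
      assert (Hts : better t s0) by (apply Hmin; [apply HL | split]; auto).
      specialize (Hts _ _ Hnt Hn0).
      assert (Hn0h : INR n0 <= INR h) by (apply le_INR, (is_dist_le Hn0 D0)).
      assert (Hhn' : INR (S h) <= INR n') by (apply le_INR; lia).
      rewrite S_INR in Hhn'. destruct (Hb _ Ss0); destruct (Hb _ Ss'); lra.
Qed.

Lemma vor_min_geodesic_step v w s n :
  vor_min a sites l v s -> is_dist a v s (S n) -> a v w -> is_dist a w s n ->
  vor_min a sites l w s.
Proof.
  intros [Ss [n0 [Dn0 Hmin]]] Dv Hvw Dw. split; auto. exists n; split; auto.
  intros t n' St Dt.
  rewrite (is_dist_unique Dn0 Dv) in Hmin.
  assert (Dvt : dist_le a v t (S n'))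
    by (exists (S n'); split; auto; econstructor; eauto using is_dist_walk).
  destruct (is_dist_of_dist_le Dvt) as [n'' Dn''].
  specialize (Hmin t n'' St Dn'').
  assert (INR n'' <= INR (S n')) by (apply le_INR, (is_dist_le Dn'' Dvt)).
  rewrite S_INR in *. lra.
Qed.

Lemma vor_min_cell_walk s n v :
  vor_min a sites l v s -> is_dist a v s n ->
  walk (induced a (fun x => vor_min a sites l x s)) v s n.
Proof.
  revert v; induction n as [|n IH]; intros v Vv Dv.
  - apply is_dist_walk, walk_0_inv in Dv; subst; constructor.
  - destruct (is_dist_S_inv Dv) as [w [Hvw Dw]].
    assert (Vw : vor_min a sites l w s) by (eapply vor_min_geodesic_step; eauto).
    econstructor; [split; [exact Hvw | split; assumption] | apply IH; auto].
Qed.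

Lemma vor_min_of_close_site (Rad : nat) (sym : forall x y, a x y -> a y x) x s d :
  separated a sites Rad -> sites s -> is_dist a x s d -> (2 * d <= Rad)%nat ->
  vor_min a sites l x s.
Proof.
  intros Sep Ss Dx Hd. destruct GL as [Hb _].
  split; auto. exists d; split; auto. intros s' n' Ss' Ds'.
  destruct (classic (s = s')) as [<-|Hne].
  - rewrite (is_dist_unique Dx Ds'); lra.
  - assert (Hfar : (Rad < d + n')%nat).
    { destruct (le_lt_dec (d + n') Rad) as [Hle|]; auto. exfalso.
      apply (Sep s s' Ss Ss' Hne). exists (d + n')%nat; split; auto.
      apply walk_app with x; [apply walk_rev|]; auto using is_dist_walk. }
    assert (Hd' : INR (S d) <= INR n') by (apply le_INR; lia).
    rewrite S_INR in Hd'. destruct (Hb _ Ss); destruct (Hb _ Ss'); lra.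
Qed.

End Voronoi.

Section CellGraph.
Variables (V : Type) (adj : V -> V -> Prop) (S1 : V -> Prop) (l1 : V -> R).

Lemma cell_graph_sym (sym : forall x y, adj x y -> adj y x) x y :
  cell_graph adj S1 l1 x y -> cell_graph adj S1 l1 y x.
Proof.
  intros [Sx [Sy [Hne [u [w [Vu [Vw Huw]]]]]]].
  split; [|split; [|split]]; auto. exists w, u; auto.
Qed.

Lemma cell_graph_dist_le_walk h :
  locally_finite adj -> net_covering adj (fun _ => True) S1 h -> good_label S1 l1 ->
  forall m u w p q, walk adj u w m ->
  vor_min adj S1 l1 u p -> vor_min adj S1 l1 w q -> dist_le (cell_graph adj S1 l1) p q m.
Proof.
  intros LF Cov GL; induction m as [|m IH]; intros u w p q W Vp Vq.
  - apply walk_0_inv in W; subst. rewrite (vor_min_unique GL Vp Vq).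
    exists 0%nat; split; auto; constructor.
  - destruct (walk_S_inv W) as [x [Hux Wx]].
    destruct (vor_min_exists GL LF Cov x) as [c Vc].
    destruct (IH _ _ c q Wx Vc Vq) as [k [Hk Wk]].
    destruct (classic (p = c)) as [<-|Hne].
    + exists k; split; auto.
    + exists (S k); split; [lia|]. econstructor; eauto.
      split; [apply Vp | split; [apply Vc | split; [auto | exists u, x; auto]]].
Qed.

End CellGraph.

Section SecondLevel.
Variables (V : Type) (adj : V -> V -> Prop) (S1 : V -> Prop) (l1 : V -> R)
  (S2 : V -> Prop) (l2 : V -> R) (s : V).
Hypothesis sym : forall x y, adj x y -> adj y x.

Let cell2s := cell2 adj S1 l1 S2 l2 s.
Let in_cell2s := induced adj cell2s.
Let Gamma := cell_graph adj S1 l1.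

Lemma cell2_walk_to_cell1_site p x :
  vor_min Gamma S2 l2 p s -> vor_min adj S1 l1 x p -> exists k, walk in_cell2s x p k.
Proof.
  intros Cp Vx. pose proof Vx as [_ [n [Dn _]]].
  exists n. eapply walk_mono; [|apply (vor_min_cell_walk Vx Dn)].
  intros y z [Hyz [Vy Vz]]. split; auto. split; exists p; auto.
Qed.

Lemma cell2_walk_of_cell_graph_walk m p q :
  walk (induced Gamma (fun x => vor_min Gamma S2 l2 x s)) p q m ->
  exists k, walk in_cell2s p q k.
Proof.
  induction 1 as [p|p r q n [[_ [_ [_ [x [y [Vx [Vy Axy]]]]]]] [Cp Cr]] _ [k3 W3]].
  - exists 0%nat; constructor.
  - destruct (cell2_walk_to_cell1_site Cp Vx) as [k1 W1].
    destruct (cell2_walk_to_cell1_site Cr Vy) as [k2 W2].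
    assert (Wxp : walk in_cell2s p x k1)
      by (apply (walk_rev (induced_sym (P := cell2s) sym)); auto).
    exists (k1 + (S k2 + k3))%nat. apply walk_app with x; auto.
    econstructor; [split; [exact Axy | split; [exists p | exists r]; auto] |].
    apply walk_app with r; auto.
Qed.

Lemma cell2_walk_to_site u : cell2s u -> exists k, walk in_cell2s u s k.
Proof.
  intros [s1 [Vu Cs1]].
  destruct (cell2_walk_to_cell1_site Cs1 Vu) as [k1 W1].
  pose proof Cs1 as [_ [d [Dd _]]].
  destruct (cell2_walk_of_cell_graph_walk (vor_min_cell_walk Cs1 Dd)) as [k2 W2].
  exists (k1 + k2)%nat. apply walk_app with s1; auto.
Qed.

Lemma cell2_connected : connected_in adj cell2s.
Proof.
  intros u w Hu Hw.
  destruct (cell2_walk_to_site Hu) as [k1 W1]. destruct (cell2_walk_to_site Hw) as [k2 W2].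
  exists (k1 + k2)%nat. apply walk_app with s; auto.
  apply (walk_rev (induced_sym (P := cell2s) sym)); auto.
Qed.

End SecondLevel.

Theorem claim5p4 (V : Type) (adj : V -> V -> Prop) (h Rad : nat)
  (S1 : V -> Prop) (l1 : V -> R) (S2 : V -> Prop) (l2 : V -> R) :
  simple_graph adj -> locally_finite adj ->
  (exists k, h = (2 * k)%nat) -> (0 < h)%nat -> (0 < Rad)%nat ->
  separated adj S1 h -> net_covering adj (fun _ => True) S1 h -> good_label S1 l1 ->
  (forall s, S2 s -> S1 s) ->
  separated (cell_graph adj S1 l1) S2 Rad ->
  net_covering (cell_graph adj S1 l1) S1 S2 Rad -> good_label S2 l2 ->
  forall s, S2 s ->
    connected_in adj (cell2 adj S1 l1 S2 l2 s) /\
    forall v n, is_dist adj s v n ->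
      (Z.of_nat n <= Z.of_nat (Rad / 2) - Z.of_nat h)%Z ->
      cell2 adj S1 l1 S2 l2 s v.
Proof.
  intros [sym _] LF _ _ _ _ Cov GL1 S21 Sep2 _ GL2 s Ss.
  split; [apply (cell2_connected sym)|].
  (* the ball of radius floor(R/2) is already contained in V_{2,s} *)
  intros v n Dsv HZ.
  assert (Hn : (2 * n <= Rad)%nat) by (pose proof (Nat.Div0.mul_div_le Rad 2); lia).
  destruct (vor_min_exists GL1 LF Cov v) as [s1 Vs1].
  assert (Dn : dist_le (cell_graph adj S1 l1) s1 s n)
    by (apply (cell_graph_dist_le_walk LF Cov GL1 (w := s) (u := v));
        auto using vor_min_self, walk_rev, is_dist_walk).
  destruct (is_dist_of_dist_le Dn) as [d Dd].
  pose proof (is_dist_le Dd Dn).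
  exists s1; split; auto.
  apply (vor_min_of_close_site GL2 (cell_graph_sym (S1 := S1) (l1 := l1) sym) Sep2 Ss Dd); lia.
Qed.
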